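(* Let $G$ be a graph with a tight clique cutset $Q$, let $H$ be a tight component of $G-Q$, and let $V_2 = V(G)\setminus V(H)$. Let $\ell \ge \chi(G)+1$ and let $\alpha,\beta$ be two $\ell$-colourings of $G$ whose restrictions to $V_2$ are equal. Suppose $H$ is $\ell_1$-mixing for every integer $\ell_1 \ge \chi(H)+1$. Then there is a path between $\alpha$ and $\beta$ in $\mathcal{R}_\ell(G)$.
   Context: All graphs are finite and simple. A $k$-colouring is a proper colouring with colours $\{1,\dots,k\}$; $\chi$ denotes chromatic number. $\mathcal{R}_k(G)$ has the $k$-colourings of $G$ as vertices, two being adjacent if they differ on exactly one vertex; $G$ is $k$-mixing if $\mathcal{R}_k(G)$ is connected. A clique cutset of $G$ is a clique $Q$ such that $G-Q$ has more components than $G$. A clique cutset $Q$ is tight if some component $H$ of $G-Q$ is complete to $Q$ (every vertex of $H$ adjacent to every vertex of $Q$); such an $H$ is a tight component. *)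

(* A simple graph is a symmetric irreflexive relation e on a finType T. *)
From mathcomp Require Import all_boot.
Set Implicit Arguments. Unset Strict Implicit. Unset Printing Implicit Defensive.

Section Graphs.
Variables (T : finType) (e : rel T).

(* a proper k-colouring; colours {1..k} are represented by 'I_k = {0..k-1} *)
Definition proper_col {k : nat} (c : {ffun T -> 'I_k}) : bool :=
  [forall x, forall y, e x y ==> (c x != c y)].

Definition colourable (k : nat) : bool := [exists c : {ffun T -> 'I_k}, proper_col c].

Definition chi : nat := find colourable (iota 0 #|T|.+1).

Definition recol_adj (k : nat) : rel {ffun T -> 'I_k} :=
  fun a b => [&& proper_col a, proper_col b & #|[set v | a v != b v]| == 1].

Definition mixing (k : nat) : Prop :=
  forall a b : {ffun T -> 'I_k}, proper_col a -> proper_col b -> connect (@recol_adj k) a b.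

(* edges of G[S] (other vertices become isolated) *)
Definition rel_on (S : {set T}) : rel T := fun x y => [&& x \in S, y \in S & e x y].

Definition ncomp (S : {set T}) : nat := n_comp (rel_on S) (mem S).

Definition is_component (S H : {set T}) : Prop :=
  exists2 x, x \in S & H = [set y | connect (rel_on S) x y].

Definition is_clique (Q : {set T}) : Prop :=
  forall x y, x \in Q -> y \in Q -> x != y -> e x y.

Definition clique_cutset (Q : {set T}) : Prop :=
  is_clique Q /\ ncomp setT < ncomp (~: Q).

Definition complete_to (H Q : {set T}) : Prop :=
  forall x y, x \in H -> y \in Q -> e x y.

End Graphs.
Arguments recol_adj {T} e k.

Definition induced (T : finType) (e : rel T) (S : {set T}) : rel {x : T | x \in S} :=
  fun x y => e (val x) (val y).
Arguments induced {T} e S _ _.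

From mathcomp Require Import all_boot zify.
Set Implicit Arguments. Unset Strict Implicit. Unset Printing Implicit Defensive.

(* Q is a clique disjoint from H, so every colouring of G uses |Q| distinct
   colours on Q, none of which can appear on H. Restricting an optimal
   colouring of G therefore gives chi(H) <= chi(G) - |Q| < l - |Q|, so the
   palette L of the l - |Q| colours avoided by alpha on Q is large enough for
   H to be |L|-mixing. The colourings alpha and beta both colour H from L,
   and every L-colouring of H extended by alpha outside H is proper, because
   the neighbours of H outside H lie in Q. A recolouring sequence of H inside
   L thus lifts to one of G from alpha to beta. *)

Lemma connect_homo (A B : finType) (r : rel A) (r' : rel B) (f : A -> B) :
  {homo f : x y / r x y >-> r' x y} ->
  forall x y, connect r x y -> connect r' (f x) (f y).
Proof.
move=> hf x y /connectP [p + ->]; elim: p x => [|z p IHp] x /=.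
  by rewrite connect0.
by case/andP=> /hf rxz /IHp; apply: connect_trans (connect1 rxz).
Qed.

Section Colourings.
Variables (U : finType) (r : rel U).

Lemma proper_colP k (c : {ffun U -> 'I_k}) :
  reflect (forall x y, r x y -> c x != c y) (proper_col r c).
Proof.
apply: (iffP forallP) => [h x y rxy | h x].
  by have := forallP (h x) y; rewrite rxy.
by apply/forallP=> y; apply/implyP; apply: h.
Qed.

Lemma colourable_card : irreflexive r -> colourable r #|U|.
Proof.
move=> r_irr; apply/existsP; exists [ffun x => enum_rank x].
apply/proper_colP=> x y rxy; rewrite !ffunE; apply: contraTneq rxy.
by move/enum_rank_inj->; rewrite r_irr.
Qed.

Lemma chi_min k : irreflexive r -> colourable r k -> chi r <= k.
Proof.
move=> r_irr ck.
have chi_le j : j <= #|U| -> colourable r j -> chi r <= j.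
  move=> le_jU cj; rewrite leqNgt; apply/negP=> lt_j_chi.
  by have := before_find 0 lt_j_chi; rewrite nth_iota ?add0n ?cj // ltnS.
have [le_kU | lt_Uk] := leqP k #|U|; first exact: chi_le.
exact/(leq_trans (chi_le _ _ (colourable_card r_irr)))/ltnW.
Qed.

Lemma colourable_chi : irreflexive r -> colourable r (chi r).
Proof.
move=> r_irr; have has_col : has (colourable r) (iota 0 #|U|.+1).
  apply/hasP; exists #|U|; first by rewrite mem_iota add0n ltnSn.
  exact: colourable_card.
have := nth_find 0 has_col; rewrite nth_iota ?add0n //.
by have := has_col; rewrite has_find size_iota.
Qed.

Lemma proper_col_palette k (c : {ffun U -> 'I_k}) (S : {set 'I_k}) :
  proper_col r c -> (forall x, c x \in S) ->
  exists2 c' : {ffun U -> 'I_#|S|}, proper_col r c' & forall x, enum_val (c' x) = c x.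
Proof.
move=> /proper_colP c_pr cS; exists [ffun x => enum_rank_in (cS x) (c x)].
  apply/proper_colP=> x y /c_pr; apply: contra; rewrite !ffunE => /eqP c'xy.
  by rewrite -(enum_rankK_in (cS x) (cS x)) c'xy enum_rankK_in.
by move=> x; rewrite ffunE enum_rankK_in.
Qed.

Lemma card_imset_clique k (c : {ffun U -> 'I_k}) (Q : {set U}) :
  proper_col r c -> is_clique r Q -> #|c @: Q| = #|Q|.
Proof.
move=> /proper_colP c_pr Q_clique; apply: card_in_imset => x y xQ yQ cxy.
by apply/eqP; apply: contraT => /(Q_clique _ _ xQ yQ)/c_pr; rewrite cxy eqxx.
Qed.

End Colourings.

Section InducedSubgraph.
Variables (T : finType) (e : rel T).

Lemma proper_col_induced k (c : {ffun T -> 'I_k}) (H : {set T}) :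
  proper_col e c -> proper_col (induced e H) [ffun x => c (val x)].
Proof. by move=> /proper_colP c_pr; apply/proper_colP=> x y /c_pr; rewrite !ffunE. Qed.

Lemma component_closed (S H : {set T}) x y :
  is_component e S H -> x \in H -> x \in S -> y \in S -> e x y -> y \in H.
Proof.
case=> x0 _ -> /[!inE] x0x xS yS exy.
by apply: connect_trans x0x (connect1 _); rewrite /rel_on xS yS.
Qed.

Lemma chi_induced_complete_clique (H Q : {set T}) :
  irreflexive e -> is_clique e Q -> complete_to e H Q ->
  chi (induced e H) + #|Q| <= chi e.
Proof.
move=> e_irr Q_clique HQ.
have /existsP [c c_pr] := colourable_chi e_irr.
have cH (x : {x | x \in H}) : [ffun x => c (val x)] x \in ~: (c @: Q).
  rewrite ffunE inE; apply/imsetP=> -[q qQ cxq].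
  by have /proper_colP/(_ _ _ (HQ _ _ (valP x) qQ)) := c_pr; rewrite cxq eqxx.
have [c' c'_pr _] := proper_col_palette (proper_col_induced H c_pr) cH.
have -> : chi e = #|~: (c @: Q)| + #|Q|.
  by rewrite -(card_imset_clique c_pr Q_clique) addnC cardsC card_ord.
by rewrite leq_add2r chi_min //; [move=> x; apply: e_irr | apply/existsP; exists c'].
Qed.

End InducedSubgraph.

Section RecolouringInsidePalette.
Variables (T : finType) (e : rel T) (H : {set T}) (l : nat).
Variables (c0 : {ffun T -> 'I_l}) (L : {set 'I_l}).
Hypothesis e_sym : symmetric e.
Hypothesis c0_pr : proper_col e c0.
Hypothesis boundary_off_palette :
  forall x y, x \in H -> y \notin H -> e x y -> c0 y \notin L.

Definition extend (g : {ffun {x | x \in H} -> 'I_#|L|}) : {ffun T -> 'I_l} :=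
  [ffun v => if insub v is Some x then enum_val (g x) else c0 v].

Lemma extend_in g v (vH : v \in H) : extend g v = enum_val (g (Sub v vH)).
Proof. by rewrite ffunE insubT. Qed.

Lemma extend_out g v : v \notin H -> extend g v = c0 v.
Proof. by move=> vH; rewrite ffunE insubF //; apply/negbTE. Qed.

Lemma proper_col_extend g : proper_col (induced e H) g -> proper_col e (extend g).
Proof.
move=> /proper_colP g_pr.
have cross x y : x \in H -> y \notin H -> e x y -> extend g x != extend g y.
  move=> xH yH exy; rewrite extend_in extend_out //.
  by apply: contraNneq (boundary_off_palette xH yH exy) => <-; apply: enum_valP.
apply/proper_colP=> x y exy.
have [xH | xH] := boolP (x \in H); have [yH | yH] := boolP (y \in H).
- by rewrite !extend_in (inj_eq enum_val_inj); apply: g_pr.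
- exact: cross.
- by rewrite eq_sym; apply: cross; rewrite // e_sym.
- by rewrite !extend_out //; apply/proper_colP: exy.
Qed.

Lemma card_extend_diff g1 g2 :
  #|[set v | extend g1 v != extend g2 v]| = #|[set x | g1 x != g2 x]|.
Proof.
rewrite -(card_imset _ val_inj); congr #|pred_of_set _|; apply/setP=> v; rewrite inE.
have [vH | vH] := boolP (v \in H).
  rewrite !extend_in (inj_eq enum_val_inj) -[v in RHS]/(val (Sub v vH : {x | x \in H})).
  by rewrite mem_imset ?inE //; apply: val_inj.
rewrite !extend_out // eqxx; apply/esym/imsetP=> -[x _ vx].
by move: vH; rewrite vx (valP x).
Qed.

Lemma recol_adj_extend :
  {homo extend : g1 g2 / recol_adj (induced e H) #|L| g1 g2 >-> recol_adj e l g1 g2}.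
Proof.
move=> g1 g2 /and3P [g1_pr g2_pr diff1].
by rewrite /recol_adj !proper_col_extend // card_extend_diff.
Qed.

Lemma extend_onto c :
  proper_col e c -> (forall v, v \notin H -> c v = c0 v) -> (forall v, v \in H -> c v \in L) ->
  exists2 g, proper_col (induced e H) g & extend g = c.
Proof.
move=> c_pr c_out c_in.
have cL (x : {x | x \in H}) : [ffun x => c (val x)] x \in L by rewrite ffunE c_in ?(valP x).
have [g g_pr gc] := proper_col_palette (proper_col_induced H c_pr) cL.
exists g => //; apply/ffunP=> v; have [vH | vH] := boolP (v \in H).
  by rewrite extend_in gc ffunE.
by rewrite extend_out ?c_out.
Qed.

Lemma connect_recol_in_palette a b :
  mixing (induced e H) #|L| -> proper_col e a -> proper_col e b ->
  (forall v, v \notin H -> a v = c0 v) -> (forall v, v \notin H -> b v = c0 v) ->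
  (forall v, v \in H -> a v \in L) -> (forall v, v \in H -> b v \in L) ->
  connect (recol_adj e l) a b.
Proof.
move=> H_mix a_pr b_pr a_out b_out a_in b_in.
have [ga ga_pr <-] := extend_onto a_pr a_out a_in.
have [gb gb_pr <-] := extend_onto b_pr b_out b_in.
exact/(connect_homo recol_adj_extend)/H_mix.
Qed.

End RecolouringInsidePalette.

Theorem lemma6 (T : finType) (e : rel T)
  (e_sym : symmetric e) (e_irr : irreflexive e)
  (Q H : {set T})
  (hQ : clique_cutset e Q)
  (hH : is_component e (~: Q) H)
  (htight : complete_to e H Q)
  (l : nat) (hl : chi e < l)
  (a b : {ffun T -> 'I_l}) (ha : proper_col e a) (hb : proper_col e b)
  (hab : forall v, v \notin H -> a v = b v)
  (hmix : forall l1 : nat, chi (induced e H) < l1 -> mixing (induced e H) l1) :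
  connect (recol_adj e l) a b.
Proof.
have [Q_clique _] := hQ.
have H_offQ v : v \in H -> v \notin Q.
  by move=> vH; apply/negP=> /(htight _ _ vH); rewrite e_irr.
have boundary x y : x \in H -> y \notin H -> e x y -> y \in Q.
  move=> xH yH exy; apply: contraNT yH; rewrite -in_setC => yQ.
  have xQ : x \in ~: Q by rewrite in_setC H_offQ.
  exact: component_closed hH xH xQ yQ exy.
have avoid_Q (c : {ffun T -> 'I_l}) v : proper_col e c -> (forall q, q \in Q -> c q = a q) ->
    v \in H -> c v \in ~: (a @: Q).
  move=> /proper_colP c_pr c_Q vH; rewrite inE; apply/imsetP=> -[q qQ cvq].
  by have := c_pr _ _ (htight _ _ vH qQ); rewrite cvq c_Q ?eqxx.
have a_in v : v \in H -> a v \in ~: (a @: Q) by apply: avoid_Q.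
have b_in v : v \in H -> b v \in ~: (a @: Q).
  by apply: avoid_Q => // q qQ; rewrite hab // (contraL (H_offQ q) qQ).
have off_palette x y : x \in H -> y \notin H -> e x y -> a y \notin ~: (a @: Q).
  by move=> xH yH /(boundary _ _ xH yH) yQ; rewrite inE negbK imset_f.
have chi_lt : chi (induced e H) < #|~: (a @: Q)|.
  have := chi_induced_complete_clique e_irr Q_clique htight.
  have := cardsC (a @: Q); rewrite card_ord (card_imset_clique ha Q_clique).
  lia.
apply: (connect_recol_in_palette e_sym ha off_palette (hmix _ chi_lt)) => // v vH.
by rewrite hab.
Qed.
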